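(* Let $q\ge0$, let $s_0<s_1<\dots<s_q$ be distinct nodes in $[0,1]$ with $s_q=1$, and let $\{\lambda_n^{[q]}\}_{n=0}^q$ be the corresponding Lagrange basis of $\mathcal{P}^q([0,1])$. Define, for $m,n=0,\dots,q$, $$a_{mn}=\int_0^1\dot\lambda_n^{[q]}(t)\lambda_m^{[q]}(t)\,dt+\lambda_n^{[q]}(0)\lambda_m^{[q]}(0),$$ let $A=(a_{mn})_{m,n=0}^q$ (which is invertible) and $\bar A=(\bar a_{mn})=A^{-1}$. Then for every $m=0,\dots,q$, $$\sum_{n=0}^q\bar a_{mn}\lambda_n^{[q]}(0)=1.$$
   Context: $\mathcal{P}^q([0,1])$ is the space of polynomials of degree $\le q$ on $[0,1]$; the Lagrange basis for nodes $s_0,\dots,s_q$ is $\lambda_n(s)=\prod_{l\ne n}(s-s_l)/(s_n-s_l)$. *)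

From HB Require Import structures.
From mathcomp Require Import all_boot all_order all_algebra.
From mathcomp Require Import all_classical all_reals all_analysis.
Set Implicit Arguments. Unset Strict Implicit. Unset Printing Implicit Defensive.
Import Order.TTheory GRing.Theory Num.Theory.
Local Open Scope ring_scope.

Definition lagrange_basis (R : fieldType) (q : nat) (s : 'I_q.+1 -> R)
  (n : 'I_q.+1) : {poly R} :=
  \prod_(l < q.+1 | l != n) (('X - (s l)%:P) * ((s n - s l)^-1)%:P).

Definition matA (R : realType) (q : nat) (s : 'I_q.+1 -> R) : 'M[R]_q.+1 :=
  \matrix_(m < q.+1, n < q.+1)
    (Rintegral (@lebesgue_measure R) `[0, 1]%classic
       (fun t => ((lagrange_basis s n)^`()).[t] * (lagrange_basis s m).[t])
     + (lagrange_basis s n).[0] * (lagrange_basis s m).[0]).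

From HB Require Import structures.
From mathcomp Require Import all_boot all_order all_algebra.
From mathcomp Require Import all_classical all_reals all_analysis.
From mathcomp Require Import ring.
Import Order.TTheory GRing.Theory Num.Theory.
Import numFieldNormedType.Exports.
Local Open Scope ring_scope.

(* The entries of A are a_mn = B(l_n, l_m) for the bilinear form
   B(u, v) = int_0^1 u' v + u(0) v(0) on P^q.  Integrating by parts,
   2 B(u, u) = u(1)^2 + u(0)^2, so B(u, u) = 0 forces u(0) = 0, and then
   B(u, u') = int_0^1 u'^2 = 0 forces u' = 0: B is nondegenerate, so A is
   invertible.  Since the l_n sum to 1 and B(1, v) = v(0), the row sums of A
   are the values l_m(0); hence A 1 = (l_m(0))_m, i.e. A^-1 (l_n(0))_n = 1. *)

Section PolyAntiderivative.
Context {R : numFieldType}.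

Definition antideriv (p : {poly R}) : {poly R} :=
  \poly_(i < (size p).+1) (if i is j.+1 then p`_j / j.+1%:R else 0).

Lemma antiderivK (p : {poly R}) : (antideriv p)^`() = p.
Proof.
apply/polyP => i; rewrite coef_deriv coef_poly /=.
case: ltnP => [lt_ip|le_pi].
  by rewrite -[_ *+ i.+1]mulr_natr divfK // pnatr_eq0.
by rewrite mul0rn nth_default.
Qed.

Lemma deriv_eq0_polyC (p : {poly R}) : p^`() = 0 -> p = (p.[0])%:P.
Proof.
move=> dp0; apply/polyP => [[|k]]; first by rewrite coefC horner_coef0.
have /eqP := congr1 (fun r : {poly R} => r`_k) dp0.
by rewrite coef_deriv coef0 coefC mulrn_eq0 /= => /eqP.
Qed.

End PolyAntiderivative.

Lemma poly_eq0_on_itv (R : numFieldType) (a b : R) (p : {poly R}) : a < b ->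
  (forall x, a <= x <= b -> p.[x] = 0) -> p = 0.
Proof.
move=> lt_ab p_eq0; set n := size p.
have [n0|n_gt0] := posnP n; first by apply/eqP; rewrite -size_poly_eq0 -/n n0.
have n_neq0 : (n%:R : R) != 0 by rewrite pnatr_eq0 -lt0n.
have ba_neq0 : b - a != 0 by rewrite subr_eq0 gt_eqF.
pose grid := [seq a + (b - a) * (k%:R / n%:R) | k <- iota 0 n].
apply: (@roots_geq_poly_eq0 _ p grid); last by rewrite size_map size_iota.
- apply/allP => x /mapP [k]; rewrite mem_iota add0n => /andP[_ lt_kn] ->.
  have k0 : 0 <= k%:R / n%:R :> R by rewrite divr_ge0 ?ler0n.
  have k1 : k%:R / n%:R <= 1 :> R.
    by rewrite ler_pdivrMr ?ltr0n // mul1r ler_nat ltnW.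
  have ba_ge0 : 0 <= b - a by rewrite subr_ge0 ltW.
  by apply/eqP/p_eq0; rewrite lerDl mulr_ge0 //= -lerBrDl ler_piMr.
- rewrite map_inj_in_uniq ?iota_uniq // => i j _ _ /addrI /(mulfI ba_neq0).
  by move/(mulIf (invr_neq0 n_neq0))/eqP; rewrite eqr_nat => /eqP.
Qed.

Section IntegralOverUnitInterval.
Context {R : realType}.
Notation mu := (@lebesgue_measure R).

Definition int01 (p : {poly R}) : R := Rintegral mu `[0, 1]%classic (fun x => p.[x]).

Lemma int01_integrable (p : {poly R}) :
  mu.-integrable `[0, 1]%classic (EFin \o horner p).
Proof.
apply: continuous_compact_integrable; first exact: segment_compact.
exact/continuous_subspaceT/continuous_horner.
Qed.

Lemma int01D (p r : {poly R}) : int01 (p + r) = int01 p + int01 r.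
Proof.
rewrite /int01 -RintegralD ?int01_integrable //.
by apply: eq_Rintegral => x _; rewrite hornerD.
Qed.

Lemma int01Z (c : R) (p : {poly R}) : int01 (c *: p) = c * int01 p.
Proof.
rewrite /int01 -RintegralZl ?int01_integrable //.
by apply: eq_Rintegral => x _; rewrite hornerZ.
Qed.

Lemma int01_0 : int01 0 = 0.
Proof. by rewrite -(scale0r (0 : {poly R})) int01Z mul0r. Qed.

Lemma int01_sum (I : finType) (F : I -> {poly R}) :
  int01 (\sum_i F i) = \sum_i int01 (F i).
Proof. exact: (big_morph int01 int01D int01_0). Qed.

Lemma int01_deriv (p : {poly R}) : int01 p^`() = p.[1] - p.[0].
Proof.
rewrite /int01 /Rintegral (@continuous_FTC2 R (horner p^`()) (horner p) 0 1) //.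
- exact/continuous_subspaceT/continuous_horner.
- split; first by move=> x _; exact: derivable_horner.
  + exact/cvg_at_right_filter/continuous_horner.
  + exact/cvg_at_left_filter/continuous_horner.
- by move=> x _; rewrite -derivE.
Qed.

Lemma int01_sqr_eq0 (w : {poly R}) : int01 (w * w) = 0 -> w = 0.
Proof.
move=> int_w2; set W := antideriv (w * w).
have W10 : W.[1] = W.[0] by apply/eqP; rewrite -subr_eq0 -int01_deriv antiderivK int_w2.
have W_ndecr : forall x y, 0 <= x -> x <= y -> y <= 1 -> W.[x] <= W.[y].
  apply: ger0_derive1_ndecr => [x _|x _|]; first exact: derivable_horner.
    by rewrite -derivE antiderivK hornerM -expr2 sqr_ge0.
  exact/continuous_subspaceT/continuous_horner.
have W_cst : W - (W.[0])%:P = 0.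
  apply: (@poly_eq0_on_itv _ 0 1) => // x /andP[x0 x1].
  rewrite hornerD hornerN hornerC; apply/eqP; rewrite subr_eq0 eq_le.
  by rewrite -{1}W10 !W_ndecr ?lexx.
have /eqP := congr1 deriv W_cst.
by rewrite derivB derivC subr0 antiderivK deriv0 mulf_eq0 orbb => /eqP.
Qed.

End IntegralOverUnitInterval.

Section LagrangeBasis.
Context {R : fieldType} {q : nat} {s : 'I_q.+1 -> R}.
Hypothesis s_inj : injective s.
Notation L := (lagrange_basis s).

Let node_diff_neq0 (n l : 'I_q.+1) : l != n -> s n - s l != 0.
Proof. by move=> ln; rewrite subr_eq0; apply: contra ln => /eqP/s_inj->. Qed.

Lemma lagrange_basis_node (n k : 'I_q.+1) : (L n).[s k] = (n == k)%:R.
Proof.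
rewrite /lagrange_basis horner_prod; have [<-|nk] := eqVneq n k.
  apply: big1 => l ln.
  by rewrite hornerM hornerXsubC hornerC mulfV ?node_diff_neq0.
by rewrite (bigD1 k) 1?eq_sym //= hornerM hornerXsubC subrr !mul0r.
Qed.

Lemma size_lagrange_basis (n : 'I_q.+1) : (size (L n) <= q.+1)%N.
Proof.
have factor_neq0 l : l != n -> ('X - (s l)%:P) * ((s n - s l)^-1)%:P != 0.
  by move=> ln; rewrite mulf_neq0 ?polyXsubC_eq0 // polyC_eq0 invr_eq0 node_diff_neq0.
rewrite /lagrange_basis size_prod // (eq_bigr (fun=> 2%N)) => [|l ln]; last first.
  by rewrite mulrC size_Cmul ?invr_eq0 ?node_diff_neq0 // size_XsubC.
rewrite sum_nat_const muln2 -addnn -addSn addnK ltnS.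
apply: (@leq_trans #|predC1 n|); last by rewrite cardC1 card_ord.
by apply/eq_leq/eq_card => l; rewrite !inE.
Qed.

Lemma lagrange_combo_node (c : 'I_q.+1 -> R) (k : 'I_q.+1) :
  (\sum_n c n *: L n).[s k] = c k.
Proof.
rewrite horner_sum (bigD1 k) //= hornerZ lagrange_basis_node eqxx mulr1.
rewrite big1 ?addr0 // => n nk.
by rewrite hornerZ lagrange_basis_node (negbTE nk) mulr0.
Qed.

Lemma size_lagrange_combo (c : 'I_q.+1 -> R) :
  (size (\sum_n c n *: L n)%R <= q.+1)%N.
Proof.
apply: (big_ind (fun p : {poly R} => size p <= q.+1)%N) => [|p r sp sr|n _].
- by rewrite size_poly0.
- by rewrite (leq_trans (size_polyD _ _)) // geq_max sp sr.
- by rewrite (leq_trans (size_scale_leq _ _)) ?size_lagrange_basis.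
Qed.

Lemma lagrange_interpolation (p : {poly R}) :
  (size p <= q.+1)%N -> p = \sum_m p.[s m] *: L m.
Proof.
move=> sp; apply/eqP; rewrite -subr_eq0; apply/eqP.
apply: (@roots_geq_poly_eq0 _ _ [seq s i | i <- enum 'I_q.+1]).
- apply/allP => x /mapP [k _ ->].
  by rewrite rootE hornerD hornerN lagrange_combo_node subrr.
- by rewrite map_inj_uniq // enum_uniq.
- rewrite size_map size_enum_ord (leq_trans (size_polyD _ _)) // geq_max sp.
  by rewrite size_polyN size_lagrange_combo.
Qed.

Lemma sum_lagrange_basis : \sum_n L n = 1.
Proof.
rewrite [RHS]lagrange_interpolation ?size_poly1 //.
by apply: eq_bigr => n _; rewrite hornerC scale1r.
Qed.

End LagrangeBasis.

Section LagrangeForm.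
Context {R : realType}.

Definition lagrange_form (u v : {poly R}) : R := int01 (u^`() * v) + u.[0] * v.[0].
Local Notation B := lagrange_form.

Lemma lagrange_form_suml (I : finType) (c : I -> R) (p : I -> {poly R}) v :
  B (\sum_i c i *: p i) v = \sum_i c i * B (p i) v.
Proof.
rewrite /B raddf_sum mulr_suml int01_sum horner_sum mulr_suml -big_split.
by apply: eq_bigr => i _ /=; rewrite derivZ -scalerAl int01Z hornerZ mulrDr mulrA.
Qed.

Lemma lagrange_form_sumr (I : finType) (c : I -> R) u (p : I -> {poly R}) :
  B u (\sum_i c i *: p i) = \sum_i c i * B u (p i).
Proof.
rewrite /B mulr_sumr int01_sum horner_sum mulr_sumr -big_split.
by apply: eq_bigr => i _ /=; rewrite -scalerAr int01Z hornerZ mulrDr mulrCA.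
Qed.

Lemma lagrange_form1l v : B 1 v = v.[0].
Proof. by rewrite /B derivC mul0r int01_0 hornerC mul1r add0r. Qed.

Lemma lagrange_form_diag u : B u u *+ 2 = u.[1] ^+ 2 + u.[0] ^+ 2.
Proof.
have parts : int01 (u^`() * u) *+ 2 = u.[1] ^+ 2 - u.[0] ^+ 2.
  by rewrite mulr2n -int01D [X in _ + X]mulrC -derivM int01_deriv !hornerM !expr2.
by rewrite /B mulrnDl parts mulr2n -!expr2; ring.
Qed.

Lemma lagrange_form_definite u : B u u = 0 -> B u u^`() = 0 -> u = 0.
Proof.
move=> Buu Bud.
have u0 : u.[0] = 0.
  have /eqP := lagrange_form_diag u; rewrite Buu mul0rn eq_sym.
  by rewrite paddr_eq0 ?sqr_ge0 // => /andP[_]; rewrite sqrf_eq0 => /eqP.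
have du0 : u^`() = 0 by apply: int01_sqr_eq0; move: Bud; rewrite /B u0 mul0r addr0.
by rewrite [u](deriv_eq0_polyC _ du0) u0 polyC0.
Qed.

End LagrangeForm.

Lemma invmx_row_sum (R : comUnitRingType) (n : nat) (A : 'M[R]_n) (b : 'I_n -> R) :
  A \in unitmx -> (forall i, \sum_j A i j = b i) ->
  forall i, \sum_j invmx A i j * b j = 1.
Proof.
move=> A_unit Ab i; under eq_bigr do rewrite -Ab mulr_sumr.
rewrite exchange_big /=.
transitivity (\sum_k (invmx A *m A) i k); first by apply: eq_bigr => k _; rewrite mxE.
rewrite mulVmx // (bigD1 i) //= big1 => [|k ki]; first by rewrite mxE eqxx addr0.
by rewrite mxE eq_sym (negbTE ki).
Qed.

Section MatA.
Context {R : realType} {q : nat} {s : 'I_q.+1 -> R}.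
Hypothesis s_inj : injective s.
Notation L := (lagrange_basis s).

Lemma matA_entry (m n : 'I_q.+1) : matA s m n = lagrange_form (L n) (L m).
Proof.
rewrite mxE /lagrange_form /int01; congr (_ + _).
by apply: eq_Rintegral => t _; rewrite hornerM.
Qed.

Lemma matA_unit : matA s \in unitmx.
Proof.
rewrite -unitmx_tr -row_free_unit; apply: inj_row_free => c cA0.
pose u := \sum_n c 0 n *: L n.
have u_orth_basis m : lagrange_form u (L m) = 0.
  have := congr1 (fun M : 'rV_q.+1 => M 0 m) cA0; rewrite !mxE => <-.
  by rewrite lagrange_form_suml; apply: eq_bigr => n _; rewrite mxE matA_entry.
have u_orth (v : {poly R}) : (size v <= q.+1)%N -> lagrange_form u v = 0.
  move=> sv; rewrite (lagrange_interpolation s_inj _ sv) lagrange_form_sumr.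
  by rewrite big1 // => m _; rewrite u_orth_basis mulr0.
have su : (size u <= q.+1)%N by exact: size_lagrange_combo.
have u_eq0 : u = 0.
  apply: lagrange_form_definite; apply: u_orth => //.
  have [->|u_neq0] := eqVneq u 0; first by rewrite deriv0 size_poly0.
  exact: leq_trans (ltnW (lt_size_deriv u_neq0)) su.
by apply/rowP => k; rewrite mxE -(lagrange_combo_node s_inj (c 0) k) -/u u_eq0 horner0.
Qed.

Lemma matA_row_sum (m : 'I_q.+1) : \sum_n matA s m n = (L m).[0].
Proof.
transitivity (lagrange_form (\sum_n 1 *: L n) (L m)).
  by rewrite lagrange_form_suml; apply: eq_bigr => n _; rewrite mul1r matA_entry.
by under eq_bigr do rewrite scale1r; rewrite sum_lagrange_basis // lagrange_form1l.
Qed.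

End MatA.

Theorem lemmaA2 (R : realType) (q : nat) (s : 'I_q.+1 -> R)
  (s_incr : forall i j : 'I_q.+1, (i < j)%N -> s i < s j)
  (s_in01 : forall i : 'I_q.+1, 0 <= s i <= 1)
  (s_last : s ord_max = 1) :
  matA s \in unitmx /\
  forall m : 'I_q.+1,
    \sum_(n < q.+1) (invmx (matA s)) m n * (lagrange_basis s n).[0] = 1.
Proof.
have s_inj : injective s.
  move=> i j sij; apply/val_inj.
  by case: (ltngtP i j) => // ij; have := s_incr _ _ ij; rewrite sij ltxx.
have A_unit := matA_unit s_inj.
split => //; exact: invmx_row_sum A_unit (matA_row_sum s_inj).
Qed.
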